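(* Let $p \geq 3$ be a prime and let $B > 1$ be a real number. Write $p-1 = p_1^{e_1} p_2^{e_2} \cdots p_h^{e_h}\, Q$, where $p_1 = 2 < p_2 < \cdots < p_h$ are the distinct primes less than $B$ dividing $p-1$, $e_i \geq 1$ is the exact power of $p_i$ dividing $p-1$, and $Q$ is a positive integer having no prime factor less than $B$. Assume $Q > 1$. For each $1 \leq i \leq h$ let $\alpha_i \in (\mathbb{Z}/p\mathbb{Z})^*$ satisfy $\alpha_i^{(p-1)/p_i} \not\equiv 1 \pmod p$, and set $a \equiv \prod_{i=1}^h \alpha_i^{(p-1)/p_i^{e_i}} \pmod p$. Let $S = \{ b \in (\mathbb{Z}/p\mathbb{Z})^* : b^{(p-1)/Q} \not\equiv 1 \pmod p\}$, and for $b \in S$ let $g_b \equiv a\, b^{(p-1)/Q} \pmod p$. Then the number of $b \in S$ for which $g_b$ is a primitive root modulo $p$ (i.e. a generator of $(\mathbb{Z}/p\mathbb{Z})^*$) is at least $\frac{\varphi(Q)}{Q-1}\,|S|$. Equivalently, if $b$ is chosen uniformly at random from $S$, then $g_b$ is a primitive root modulo $p$ with probability at least $\frac{\varphi(Q)}{Q-1}$.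
   Context: $\varphi$ denotes Euler's totient function. This describes the output of the paper's ''Probabilistic Primitive Root'' algorithm in the case where the factorization of $p-1$ into primes below $B$ does not fully factor $p-1$: the algorithm returns $g_b = a b^{(p-1)/Q}$ for a randomly chosen $b$ with $b^{(p-1)/Q} \not\equiv 1 \pmod p$. *)

From mathcomp Require Import all_boot all_order all_algebra.
From mathcomp Require Import reals.
Set Implicit Arguments. Unset Strict Implicit. Unset Printing Implicit Defensive.

Definition small_primes (R : realType) (B : R) (n : nat) : seq nat :=
  [seq q <- primes n | (q%:R < B)%R].

From mathcomp Require Import all_boot all_order all_algebra.
From mathcomp Require Import reals.
From mathcomp Require Import all_solvable all_field.
Set Implicit Arguments. Unset Strict Implicit. Unset Printing Implicit Defensive.
Import Order.TTheory GRing.Theory Num.Theory.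
Local Open Scope ring_scope.

(* F_p^* is cyclic of order p - 1 = M Q, where M is the B-smooth part of p - 1
   and gcd(M, Q) = 1.  Each factor alpha_q^((p-1)/q^e) has order exactly q^e,
   so a has order exactly M; for a generator z this means a = z^(tQ) with
   gcd(t, M) = 1.  Writing b = z^k, the condition b^M <> 1 reads "Q does not
   divide k", and g_b = z^(tQ + kM) generates iff gcd(k, Q) = 1.  Both
   conditions are Q-periodic in k in [0, MQ), so |S| = M (Q - 1) while exactly
   M phi(Q) elements of S give primitive roots: the bound holds with equality. *)

Section PrimitiveRoots.
Variable R : comNzRingType.

Lemma prim_root1 : 1.-primitive_root (1 : R).
Proof.
have [m prim1] := prim_order_exists (ltn0Sn 0) (expr1 (1 : R)).
by rewrite dvdn1 => /eqP <-.
Qed.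

Lemma prim_root_pfactor q e (x : R) : prime q ->
  x ^+ (q ^ e.+1) = 1 -> x ^+ (q ^ e) != 1 -> (q ^ e.+1).-primitive_root x.
Proof.
move=> q_pr xq1 xq_neq1.
have qe_gt0 : (0 < q ^ e.+1)%N by rewrite expn_gt0 prime_gt0.
have [m prim_m /(dvdn_pfactor _ _ q_pr)[i le_i_e1 m_eq]] :=
  prim_order_exists qe_gt0 xq1.
case: (ltngtP i e.+1) le_i_e1 => [lt_i_e1 | //| <-] _; last by rewrite -m_eq.
case/negP: xq_neq1; rewrite -(prim_order_dvd prim_m) m_eq.
by rewrite dvdn_Pexp2l // ?prime_gt1.
Qed.

Lemma prim_rootM m n (x y : R) : coprime m n ->
  m.-primitive_root x -> n.-primitive_root y -> (m * n).-primitive_root (x * y).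
Proof.
move=> co_mn prim_x prim_y.
have [xm1 yn1] := (prim_expr_order prim_x, prim_expr_order prim_y).
have mn_gt0 : (0 < m * n)%N.
  by rewrite muln_gt0 (prim_order_gt0 prim_x) (prim_order_gt0 prim_y).
have xy1 : (x * y) ^+ (m * n) = 1.
  by rewrite exprMn exprM xm1 mulnC exprM yn1 !expr1n mul1r.
have [d prim_d d_dvd] := prim_order_exists mn_gt0 xy1.
have xyd1 : (x * y) ^+ d = 1 by rewrite (prim_expr_order prim_d).
have m_dvd_d : (m %| d)%N.
  rewrite -(Gauss_dvdl d co_mn) (prim_order_dvd prim_x).
  have := congr1 (fun u => u ^+ n) xyd1.
  by rewrite expr1n -exprM exprMn [y ^+ _]exprM exprAC yn1 expr1n mulr1 => ->.
have n_dvd_d : (n %| d)%N.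
  have co_nm : coprime n m by rewrite coprime_sym.
  rewrite -(Gauss_dvdl d co_nm) (prim_order_dvd prim_y).
  have := congr1 (fun u => u ^+ m) xyd1.
  by rewrite expr1n -exprM exprMn [x ^+ _]exprM exprAC xm1 expr1n mul1r => ->.
suff /eqP <- : d == (m * n)%N by [].
by rewrite eqn_dvd d_dvd Gauss_dvd // m_dvd_d.
Qed.

Lemma prim_root_prod (I : eqType) (r : seq I) (ord : I -> nat) (x : I -> R) :
  pairwise (fun i j => coprime (ord i) (ord j)) r ->
  {in r, forall i, (ord i).-primitive_root (x i)} ->
  (\prod_(i <- r) ord i)%N.-primitive_root (\prod_(i <- r) x i).
Proof.
elim: r => [|i r IHr]; first by rewrite !big_nil prim_root1.
rewrite pairwise_cons => /andP[/allP co_i co_r] prim_ir.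
rewrite !big_cons; apply: prim_rootM.
- rewrite big_seq; apply: (big_ind (coprime (ord i))) => [|u v|j /co_i //].
    exact: coprimen1.
  by rewrite coprimeMr => -> ->.
- exact/prim_ir/mem_head.
- by apply: IHr => // j r_j; apply: prim_ir; rewrite inE r_j orbT.
Qed.

Lemma prim_root_pfactor_part n q (x : R) : prime q ->
  x ^+ n = 1 -> x ^+ (n %/ q) != 1 ->
  (q ^ logn q n).-primitive_root (x ^+ (n %/ q ^ logn q n)).
Proof.
move=> q_pr xn1 xnq_neq1; case def_e: (logn q n) => [|e].
  by rewrite divn1 xn1 prim_root1.
set s := (n %/ q ^ e.+1)%N.
have def_n : n = (s * q ^ e * q)%N.
  by rewrite -mulnA -expnSr divnK // -def_e pfactor_dvdnn.
apply: prim_root_pfactor => //; rewrite -exprM.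
  by rewrite expnSr mulnA -def_n.
by rewrite def_n mulnK ?prime_gt0 // in xnq_neq1.
Qed.

Lemma prim_root_prod_pfactor_parts n (L : seq nat) (alpha : nat -> R) :
  uniq L -> all prime L ->
  {in L, forall q, alpha q ^+ n = 1 /\ alpha q ^+ (n %/ q) != 1} ->
  (\prod_(q <- L) q ^ logn q n)%N.-primitive_root
    (\prod_(q <- L) alpha q ^+ (n %/ q ^ logn q n)).
Proof.
move=> L_uniq L_prime alpha_ord; apply: prim_root_prod => [|q L_q]; last first.
  have [alpha_n1 alpha_nq] := alpha_ord q L_q.
  by apply: prim_root_pfactor_part => //; apply: (allP L_prime).
move: L_uniq; rewrite uniq_pairwise.
apply: sub_in_pairwise L_prime => q q' q_pr q'_pr /= neq_qq'.
by apply/coprimeXl/coprimeXr; rewrite prime_coprime // dvdn_prime2.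
Qed.

End PrimitiveRoots.

Lemma coprime_linear_comb M Q t k : coprime M Q -> coprime t M ->
  coprime (t * Q + k * M) (M * Q) = coprime k Q.
Proof.
move=> co_MQ co_tM.
have co_M : coprime (t * Q + k * M) M.
  rewrite -coprime_modl addnC modnMDl coprime_modl coprimeMl co_tM.
  by rewrite coprime_sym co_MQ.
rewrite coprimeMr co_M -coprime_modl modnMDl coprime_modl coprimeMl.
by rewrite co_MQ andbT.
Qed.

Section FieldPrimitiveRoots.
Variable F : fieldType.

Lemma prim_root_exp_factor m n (z a : F) :
  (m * n).-primitive_root z -> m.-primitive_root a ->
  exists2 t, coprime t m & a = z ^+ (t * n).
Proof.
move=> prim_z prim_a.
have m_gt0 := prim_order_gt0 prim_a.
have amn1 : a ^+ (m * n) = 1 by rewrite exprM (prim_expr_order prim_a) expr1n.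
have [[j _] /= def_a] := prim_rootP prim_z amn1.
have /dvdnP[t def_j] : (n %| j)%N.
  rewrite -(dvdn_pmul2l m_gt0) [(m * j)%N]mulnC (prim_order_dvd prim_z).
  by rewrite exprM -def_a (prim_expr_order prim_a).
have prim_zn : m.-primitive_root (z ^+ n).
  by have := dvdn_prim_root prim_z (dvdn_mulr n (dvdnn m)); rewrite mulKn.
exists t; last by rewrite def_a def_j.
by rewrite -(prim_root_exp_coprime t prim_zn) -exprM mulnC -def_j -def_a.
Qed.

Lemma prim_root_shift M Q (z a : F) k : coprime M Q ->
  (M * Q).-primitive_root z -> M.-primitive_root a ->
  (M * Q).-primitive_root (a * (z ^+ k) ^+ M) = coprime k Q.
Proof.
move=> co_MQ prim_z prim_a.
have [t co_tM ->] := prim_root_exp_factor prim_z prim_a.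
by rewrite -!exprM -exprD prim_root_exp_coprime // coprime_linear_comb.
Qed.

End FieldPrimitiveRoots.

Lemma count_iota_periodic (P : pred nat) M Q : (forall k, P (k + Q)%N = P k) ->
  count P (iota 0 (M * Q)) = (M * count P (iota 0 Q))%N.
Proof.
move=> P_per; elim: M => [|M IHM]; first by rewrite mul0n.
rewrite !mulSn iotaD count_cat add0n -IHM; congr (_ + _)%N.
rewrite -[Q in iota Q]addn0 iotaDl count_map.
by apply: eq_count => k /=; rewrite addnC P_per.
Qed.

Lemma count_not_dvdn_iota Q : (0 < Q)%N ->
  count (fun k => ~~ (Q %| k)%N) (iota 0 Q) = Q.-1.
Proof.
case: Q => // Q _; rewrite /= add0n -[RHS](size_iota 1) -count_predT.
apply: eq_in_count => k; rewrite mem_iota add1n => /andP[k_gt0 k_lt].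
by rewrite gtnNdvd.
Qed.

Lemma totient_count_iota Q : totient Q = count (fun k => coprime k Q) (iota 0 Q).
Proof.
rewrite totient_count_coprime -sum1_count [RHS]big_mkcond /index_iota subn0.
by apply: eq_bigr => k _; rewrite coprime_sym; case: coprime.
Qed.

Section FinFieldPrimitiveRoots.
Variable F : finFieldType.
Local Notation n := #|F|.-1.

Lemma expf_card_pred (x : F) : x != 0 -> x ^+ n = 1.
Proof.
move=> x_neq0; apply: (mulIf x_neq0).
by rewrite mul1r -exprSr prednK ?expf_card // ltnW ?finNzRing_gt1.
Qed.

Lemma finField_prim_root : exists z : F, n.-primitive_root z.
Proof.
have n_gt0 : (0 < n)%N by rewrite ltn_predRL finNzRing_gt1.
have nz_roots : all n.-unity_root (enum (predC1 (0 : F))).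
  by apply/allP => x; rewrite mem_enum unity_rootE => /expf_card_pred ->.
have /hasP[z _ prim_z] : has n.-primitive_root (enum (predC1 (0 : F))).
  by apply: has_prim_root n_gt0 nz_roots (enum_uniq _) _; rewrite -cardE cardC1.
by exists z.
Qed.

Lemma card_nonzero_prim_root (z : F) (P : pred F) : n.-primitive_root z ->
  #|[set b : F | (b != 0) && P b]| = count (fun k => P (z ^+ k)) (iota 0 n).
Proof.
move=> prim_z; set s := [seq z ^+ k | k <- iota 0 n].
have s_uniq : uniq s.
  rewrite map_inj_in_uniq ?iota_uniq // => i j; rewrite !mem_iota /= => i_lt j_lt.
  by move/eqP; rewrite (eq_prim_root_expr prim_z) !modn_small // => /eqP.
have mem_s b : (b \in s) = (b != 0).
  apply/mapP/idP => [[k _ ->] | b_neq0].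
    by rewrite expf_neq0 // (prim_root_eq0 prim_z) -lt0n (prim_order_gt0 prim_z).
  have [k def_b] := prim_rootP prim_z (expf_card_pred b_neq0).
  by exists (val k); rewrite // mem_iota /=.
rewrite -count_map -size_filter -(card_uniqP (filter_uniq _ s_uniq)).
by apply: eq_card => b; rewrite !inE mem_filter mem_s andbC.
Qed.

End FinFieldPrimitiveRoots.

Section ShiftedPowers.
Variables (F : finFieldType) (M Q : nat).
Hypothesis cardF : #|F|.-1 = (M * Q)%N.

Let prim_expM_eq1 (z : F) k : (M * Q).-primitive_root z ->
  ((z ^+ k) ^+ M == 1) = (Q %| k)%N.
Proof.
move=> prim_z; have M_gt0 : (0 < M)%N.
  by move: (prim_order_gt0 prim_z); rewrite muln_gt0 => /andP[].
by rewrite -exprM -(prim_order_dvd prim_z) [(k * M)%N]mulnC dvdn_pmul2l.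
Qed.

Lemma card_powers_neq1 :
  #|[set b : F | (b != 0) && (b ^+ M != 1)]| = (M * Q.-1)%N.
Proof.
have [z prim_z] := finField_prim_root F.
rewrite (card_nonzero_prim_root _ prim_z) cardF; rewrite cardF in prim_z.
rewrite (eq_count (a2 := fun k => ~~ (Q %| k)%N)) => [|k]; last first.
  by rewrite /= prim_expM_eq1.
have Q_gt0 : (0 < Q)%N.
  by move: (prim_order_gt0 prim_z); rewrite muln_gt0 => /andP[].
rewrite count_iota_periodic ?count_not_dvdn_iota // => k.
by rewrite dvdn_addl ?dvdnn.
Qed.

Lemma card_powers_shift_prim_root (a : F) : coprime M Q -> (1 < Q)%N ->
  M.-primitive_root a ->
  #|[set b : F | [&& b != 0, b ^+ M != 1 & (M * Q).-primitive_root (a * b ^+ M)]]|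
    = (M * totient Q)%N.
Proof.
move=> co_MQ Q_gt1 prim_a; have [z prim_z] := finField_prim_root F.
rewrite (card_nonzero_prim_root _ prim_z) cardF; rewrite cardF in prim_z.
rewrite (eq_count (a2 := fun k => coprime k Q)) => [|k /=].
  rewrite totient_count_iota count_iota_periodic // => k.
  by rewrite -coprime_modl modnDr coprime_modl.
rewrite prim_expM_eq1 // prim_root_shift //.
case co_kQ: (coprime k Q); rewrite ?andbF // andbT.
apply/negP => /coprime_dvdl/(_ co_kQ).
by rewrite /coprime gcdnn gtn_eqF.
Qed.

End ShiftedPowers.

Theorem theorem1 (R : realType) (p : nat) (B : R) (Q : nat)
    (alpha : nat -> 'F_p)
    (hp : prime p) (hp3 : (3 <= p)%N) (hB : 1 < B)
    (hQpos : (0 < Q)%N)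
    (hQsmooth : forall q : nat, prime q -> (q %| Q)%N -> ~ (q%:R < B))
    (hdec : p.-1 = (\prod_(q <- small_primes B p.-1) q ^ logn q p.-1 * Q)%N)
    (hQ1 : (1 < Q)%N)
    (halpha : forall q : nat, q \in small_primes B p.-1 ->
       alpha q != 0 /\ alpha q ^+ (p.-1 %/ q) != 1) :
  let a : 'F_p := \prod_(q <- small_primes B p.-1)
                    alpha q ^+ (p.-1 %/ q ^ logn q p.-1) in
  let S := [set b : 'F_p | (b != 0) && (b ^+ (p.-1 %/ Q) != 1)] in
  let g := fun b : 'F_p => a * b ^+ (p.-1 %/ Q) in
  (totient Q)%:R / (Q.-1)%:R * (#|S|%:R : R)
    <= (#|[set b in S | (p.-1).-primitive_root (g b)]|%:R : R).
Proof.
set n := p.-1 in halpha hdec *; set L := small_primes B n in halpha hdec *.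
set M := (\prod_(q <- L) q ^ logn q n)%N in hdec; cbv zeta.
set a := \prod_(q <- L) _; set S := [set b : 'F_p | _].
have cardF : #|'F_p|.-1 = (M * Q)%N by rewrite card_Fp.
have nQ : (n %/ Q)%N = M by rewrite hdec mulnK.
have L_spec q : q \in L -> prime q /\ (q%:R < B).
  by rewrite mem_filter mem_primes => /andP[? /and3P[]].
have co_MQ : coprime M Q.
  rewrite /M big_seq.
  apply: (big_ind (coprime^~ Q)) => [|u v|q /L_spec[q_pr q_lt_B]].
  - exact: coprime1n.
  - by rewrite coprimeMl => -> ->.
  by apply/coprimeXl; rewrite prime_coprime //; apply/negP => /(hQsmooth q q_pr).
have prim_a : M.-primitive_root a.
  apply: prim_root_prod_pfactor_parts => [|| q /halpha[alpha_neq0 ->]].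
  - exact/filter_uniq/primes_uniq.
  - by apply/allP => q /L_spec[].
  by have := expf_card_pred alpha_neq0; rewrite card_Fp.
have -> : [set b in S | n.-primitive_root (a * b ^+ (n %/ Q))] =
    [set b | [&& b != 0, b ^+ M != 1 & (M * Q).-primitive_root (a * b ^+ M)]].
  by apply/setP => b; rewrite !inE nQ -hdec andbA.
rewrite /S nQ (card_powers_neq1 cardF) card_powers_shift_prim_root // !natrM.
have Q1_neq0 : (Q.-1)%:R != 0 :> R by rewrite pnatr_eq0 -lt0n ltn_predRL.
by rewrite mulrCA divfK.
Qed.
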